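(* Let $(u_S,u_R)$ be an environment satisfying scant-indifferences. If $(\sigma,\rho)$ is a cheap-talk equilibrium with $U_S(\sigma,\rho)$ equal to the persuasion payoff and $\rho$ is pure-on-path, then there exist a partitional messaging strategy $\hat\sigma$ and a pure action strategy $\hat\rho$ such that $|M_{\hat\sigma}|\le|A|$, $(\hat\sigma,\hat\rho)$ is a cheap-talk equilibrium, and $U_S(\hat\sigma,\hat\rho)$ equals the persuasion payoff.
   Context: $A=\{a_1,\dots,a_{|A|}\}$ and $\Omega$ are finite nonempty sets, $\mu_0$ a prior on $\Omega$ with $\mu_0(\omega)>0$ for all $\omega$, $M$ a finite message set with $|M|>\max\{|\Omega|,|A|\}$. An environment is a pair of functions $u_S,u_R:A\times\Omega\to[0,1]$. A messaging strategy is $\sigma:\Omega\to\Delta M$; an action strategy is $\rho:M\to\Delta A$; $\rho$ is pure if each $\rho(\cdot|m)$ is degenerate, and pure-on-path (given $\sigma$) if $\rho(\cdot|m)$ is degenerate for every $m\in M_\sigma=\{m:\sigma(m|\omega)>0\text{ for some }\omega\}$. $U_i(\sigma,\rho)=\sum_{\omega,m,a}\mu_0(\omega)\sigma(m|\omega)\rho(a|m)u_i(a,\omega)$. $(\sigma,\rho)$ is S-BR if $\sigma\in\arg\max_{\sigma'}U_S(\sigma',\rho)$, R-BR if $\rho\in\arg\max_{\rho'}U_R(\sigma,\rho')$; a cheap-talk equilibrium is both. The persuasion payoff is the maximum of $U_S$ over R-BR profiles. $\sigma$ is partitional if for every $\omega$ some $m$ has $\sigma(m|\omega)=1$. Scant-indifferences: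 with $\mathbf u_S(a)=u_S(a,\cdot)\in\mathbb R^{|\Omega|}$, $\mathbf u_R(a)=u_R(a,\cdot)$, for each $i$ the expanded-indifference matrix $T^i$ has $|\Omega|$ columns and rows $\mathbf u_S(a_j)-\mathbf u_S(a_i)$ ($j\ne i$), $\mathbf u_R(a_j)-\mathbf u_R(a_i)$ ($j\ne i$), and the rows of the $|\Omega|\times|\Omega|$ identity; the environment satisfies scant-indifferences if for each $i$ every matrix obtained from $T^i$ by deleting some rows has full rank. *)

From HB Require Import structures.
From mathcomp Require Import all_boot all_order all_algebra.
From mathcomp Require Import reals.
Set Implicit Arguments. Unset Strict Implicit. Unset Printing Implicit Defensive.
Import Order.TTheory GRing.Theory Num.Theory.
Local Open Scope ring_scope.

Section Game.
Variables (R : realType) (A Omega M : finType).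

Definition is_dist (T : finType) (p : T -> R) : Prop :=
  (forall t, 0 <= p t) /\ \sum_(t : T) p t = 1.

Definition degenerate (T : finType) (p : T -> R) : Prop :=
  exists t0 : T, forall t, p t = if t == t0 then 1 else 0.

(* messaging strategy sigma : Omega -> Delta M, written sigma w m = sigma(m|w) *)
Definition msg_strategy (sigma : Omega -> M -> R) : Prop :=
  forall w, is_dist (sigma w).

(* action strategy rho : M -> Delta A, written rho m a = rho(a|m) *)
Definition act_strategy (rho : M -> A -> R) : Prop :=
  forall m, is_dist (rho m).

Definition pure_strategy (rho : M -> A -> R) : Prop :=
  forall m, degenerate (rho m).

Definition on_path (sigma : Omega -> M -> R) : {set M} :=
  [set m | [exists w, 0 < sigma w m]].

Definition pure_on_path (sigma : Omega -> M -> R) (rho : M -> A -> R) : Prop :=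
  forall m, m \in on_path sigma -> degenerate (rho m).

Definition partitional (sigma : Omega -> M -> R) : Prop :=
  forall w, exists m, sigma w m = 1.

Definition payoff (mu0 : Omega -> R) (u : A -> Omega -> R)
    (sigma : Omega -> M -> R) (rho : M -> A -> R) : R :=
  \sum_(w : Omega) \sum_(m : M) \sum_(a : A)
     mu0 w * sigma w m * rho m a * u a w.

Definition S_BR (mu0 : Omega -> R) (uS : A -> Omega -> R)
    (sigma : Omega -> M -> R) (rho : M -> A -> R) : Prop :=
  msg_strategy sigma /\ act_strategy rho /\
  forall sigma', msg_strategy sigma' ->
    payoff mu0 uS sigma' rho <= payoff mu0 uS sigma rho.

Definition R_BR (mu0 : Omega -> R) (uR : A -> Omega -> R)
    (sigma : Omega -> M -> R) (rho : M -> A -> R) : Prop :=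
  msg_strategy sigma /\ act_strategy rho /\
  forall rho', act_strategy rho' ->
    payoff mu0 uR sigma rho' <= payoff mu0 uR sigma rho.

Definition cheap_talk_eq (mu0 : Omega -> R) (uS uR : A -> Omega -> R)
    (sigma : Omega -> M -> R) (rho : M -> A -> R) : Prop :=
  S_BR mu0 uS sigma rho /\ R_BR mu0 uR sigma rho.

Definition is_persuasion_payoff (mu0 : Omega -> R) (uS uR : A -> Omega -> R)
    (v : R) : Prop :=
  (exists sigma rho, R_BR mu0 uR sigma rho /\ payoff mu0 uS sigma rho = v) /\
  (forall sigma rho, R_BR mu0 uR sigma rho -> payoff mu0 uS sigma rho <= v).

(* Row labels of the expanded-indifference matrix T^i:
   inl (j, true)  : u_S(a_j) - u_S(a_i)   (only for j != i)
   inl (j, false) : u_R(a_j) - u_R(a_i)   (only for j != i)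
   inr w          : the row e_w of the |Omega| x |Omega| identity *)
Definition row_label := ((A * bool) + Omega)%type.

Definition row_allowed (i : A) (l : row_label) : bool :=
  match l with inl (j, _) => j != i | inr _ => true end.

Definition T_row (uS uR : A -> Omega -> R) (i : A) (l : row_label)
    (w : Omega) : R :=
  match l with
  | inl (j, true) => uS j w - uS i w
  | inl (j, false) => uR j w - uR i w
  | inr w' => if w == w' then 1 else 0
  end.

Definition T_sub (uS uR : A -> Omega -> R) (i : A) (S : {set row_label})
    : 'M[R]_(#|S|, #|Omega|) :=
  \matrix_(r < #|S|, c < #|Omega|)
     T_row uS uR i (enum_val r) (enum_val c).

Definition scant_indifferences (uS uR : A -> Omega -> R) : Prop :=
  forall (i : A) (S : {set row_label}),
    S \subset [set l | row_allowed i l] ->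
    \rank (T_sub uS uR i S) = minn #|S| #|Omega|.

End Game.
Arguments is_persuasion_payoff {R A Omega} M mu0 uS uR v.

From HB Require Import structures.
From mathcomp Require Import all_boot all_order all_algebra.
From mathcomp Require Import reals.
From mathcomp Require Import ring lra.
Import Order.TTheory GRing.Theory Num.Theory.
Local Open Scope ring_scope.

Set Implicit Arguments. Unset Strict Implicit. Unset Printing Implicit Defensive.

(* In an equilibrium that is pure on path, all messages the sender uses in a
   state [w] are equally good for her, and scant-indifferences forbids two
   actions from giving her the same utility in [w]; hence each state induces a
   single action [act w]. The direct recommendation "send [f (act w)] in state
   [w], obey it" ([f : A -> M] injective) has the same payoffs. The sender
   cannot gain from it, since every message is answered by some [act w'] that
   she could already induce; the receiver cannot gain either, since a response
   to the recommendations, composed with [rho], is a deviation from the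
   original equilibrium. Equal payoffs carry over the persuasion property. *)

Lemma mxrank_lt_zero_col (F : fieldType) m n (T : 'M[F]_(m, n)) (j : 'I_n) :
  (forall i, T i j = 0) -> (\rank T < n)%N.
Proof.
move=> Tj0.
have ej_ker : ((delta_mx 0 j : 'rV[F]_n) <= kermx T^T)%MS.
  by apply/sub_kermxP; apply/rowP => i; rewrite -rowE !mxE Tj0.
by have := mxrankS ej_ker; rewrite mxrank_ker mxrank_tr mxrank_delta subn_gt0.
Qed.

Lemma scant_indifferences_inj (R : realType) (A Omega : finType)
    (uS uR : A -> Omega -> R) :
  scant_indifferences uS uR -> forall w, injective (uS^~ w).
Proof.
move=> scant w a b uSab; apply/eqP; apply/negPn/negP => neq_ab.
pose S := inl (b, true) |: [set inr w' | w' in [set~ w]] : {set row_label A Omega}.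
have S_allowed : S \subset [set l | row_allowed a l].
  by apply/subsetP => l; rewrite !inE => /orP[/eqP -> /=|/imsetP[w' _ ->]];
    rewrite // eq_sym.
have cardS : #|S| = #|Omega|.
  rewrite cardsU1 card_imset; last by move=> ? ? [].
  have /negPf -> : inl (b, true) \notin [set inr w' | w' in [set~ w]].
    by apply/imsetP => -[].
  by rewrite cardsC1 add1n prednK // (cardD1 w).
have rankS : \rank (T_sub uS uR a S) = #|Omega| by rewrite scant // cardS minnn.
(* Every row of [T_sub uS uR a S] vanishes at [w]: the indifference row because
   [uS a w = uS b w], the identity rows because [e_w] was left out. *)
suff : (\rank (T_sub uS uR a S) < #|Omega|)%N by rewrite rankS ltnn.
apply: (@mxrank_lt_zero_col _ _ _ _ (enum_rank w)) => r; rewrite mxE enum_rankK.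
have := enum_valP r; rewrite !inE.
case: (enum_val r) => [[j []]|w'] /=.
- by case/orP => [/eqP[->]|/imsetP[]//]; rewrite uSab subrr.
- by case/orP => [/eqP|/imsetP[]].
- case/imsetP => w'' + [->]; rewrite !inE => neq_w.
  by rewrite eq_sym (negPf neq_w).
Qed.

Section PointMass.
Variables (R : realType) (T : finType).

Definition point_mass (t0 t : T) : R := if t == t0 then 1 else 0.

Lemma sum_point_massM (t0 : T) (F : T -> R) :
  \sum_t point_mass t0 t * F t = F t0.
Proof.
rewrite (bigD1 t0) //= /point_mass eqxx mul1r big1 ?addr0 // => t /negPf ->.
exact: mul0r.
Qed.

Lemma point_mass_dist (t0 : T) : is_dist (point_mass t0).
Proof.
split=> [t|]; first by rewrite /point_mass; case: eqP.
rewrite -[RHS](sum_point_massM t0 (fun=> 1)).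
by apply: eq_bigr => t _; rewrite mulr1.
Qed.

Lemma exists_pos_of_dist (p : T -> R) : is_dist p -> exists t, 0 < p t.
Proof.
case=> p_ge0 p_sum1.
have [t /andP[_ pt_gt0]] : exists t, predT t && (0 < p t).
  by apply: psumr_neq0P => [t _|]; rewrite ?p_sum1; [exact: p_ge0 | exact/eqP/oner_neq0].
by exists t.
Qed.

Lemma point_mass_gt0 (t0 t : T) : 0 < point_mass t0 t -> t = t0.
Proof. by rewrite /point_mass; case: eqP => // _; rewrite ltxx. Qed.

End PointMass.
Arguments point_mass {R T} t0 t.

Section Payoffs.
Variables (R : realType) (A Omega M : finType) (mu0 : Omega -> R).
Implicit Types (u uS uR : A -> Omega -> R) (sigma : Omega -> M -> R)
  (rho Phi : M -> A -> R) (Psi : A -> A -> R) (act : Omega -> A).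

Definition msg_utility (u : A -> Omega -> R) (rho : M -> A -> R) m w :=
  \sum_a rho m a * u a w.

Definition recommendation_payoff (act : Omega -> A) (Psi : A -> A -> R)
    (u : A -> Omega -> R) :=
  \sum_w mu0 w * \sum_a Psi (act w) a * u a w.

Lemma payoffE u sigma rho : payoff mu0 u sigma rho =
  \sum_w mu0 w * \sum_m sigma w m * msg_utility u rho m w.
Proof.
apply: eq_bigr => w _; rewrite mulr_sumr; apply: eq_bigr => m _.
by rewrite !mulr_sumr; apply: eq_bigr => a _; rewrite !mulrA.
Qed.

Lemma msg_utility_point_mass u rho m a w :
  rho m =1 point_mass a -> msg_utility u rho m w = u a w.
Proof.
by move=> rho_m; rewrite -(sum_point_massM a (u^~ w)); apply: eq_bigr => b _; rewrite rho_m.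
Qed.

Lemma payoff_sent_response u sigma (act : Omega -> A) Phi Psi :
    msg_strategy sigma ->
    (forall w m, 0 < sigma w m -> Phi m =1 Psi (act w)) ->
  payoff mu0 u sigma Phi = recommendation_payoff act Psi u.
Proof.
move=> sigma_dist Phi_sent; rewrite payoffE; apply: eq_bigr => w _; congr (_ * _).
have [sigma_ge0 sigma_sum1] := sigma_dist w.
rewrite -[RHS]mul1r -sigma_sum1 mulr_suml; apply: eq_bigr => m _.
have [sigma_gt0|] := boolP (0 < sigma w m).
  by congr (_ * _); apply: eq_bigr => a _; rewrite (Phi_sent w m).
by rewrite lt_def sigma_ge0 andbT negbK => /eqP ->; rewrite !mul0r.
Qed.

Definition redirect_msg (sigma : Omega -> M -> R) w m m' : Omega -> M -> R :=
  fun w2 m2 => sigma w2 m2 +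
    (if w2 == w then sigma w m * (point_mass m' m2 - point_mass m m2) else 0).

Lemma redirect_msg_strategy sigma w m m' :
  msg_strategy sigma -> msg_strategy (redirect_msg sigma w m m').
Proof.
move=> sigma_dist w2.
have sigma_ge0 w1 m1 : 0 <= sigma w1 m1 by have [] := sigma_dist w1.
have [pm_ge0 pm_sum1] := point_mass_dist R m'.
split=> [m2|].
- rewrite /redirect_msg; case: eqP => [->|_]; last by rewrite addr0.
  have := pm_ge0 m2; have := sigma_ge0 w m2; have := sigma_ge0 w m.
  rewrite /point_mass; case: (eqVneq m2 m) => [->|_]; nra.
- have [_ sigma_sum1] := sigma_dist w2.
  rewrite /redirect_msg big_split /= sigma_sum1; case: eqP => _; last first.
    by rewrite big1 ?addr0.
  rewrite -mulr_sumr sumrB pm_sum1.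
  by have [_ ->] := point_mass_dist R m; rewrite subrr mulr0 addr0.
Qed.

Lemma payoff_redirect_msg u sigma rho w m m' :
  payoff mu0 u (redirect_msg sigma w m m') rho = payoff mu0 u sigma rho +
    mu0 w * sigma w m * (msg_utility u rho m' w - msg_utility u rho m w).
Proof.
set V := msg_utility u rho.
have off_w w2 : w2 != w -> redirect_msg sigma w m m' w2 =1 sigma w2.
  by move=> /negPf neq_w2 m2; rewrite /redirect_msg neq_w2 addr0.
have at_w : \sum_m2 redirect_msg sigma w m m' w m2 * V m2 w =
    \sum_m2 sigma w m2 * V m2 w + sigma w m * (V m' w - V m w).
  rewrite /redirect_msg eqxx; under eq_bigr do rewrite mulrDl.
  rewrite big_split /= -(sum_point_massM m' (V^~ w)) -(sum_point_massM m (V^~ w)).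
  by rewrite -sumrB mulr_sumr; congr (_ + _); apply: eq_bigr => m2 _; ring.
rewrite !payoffE (bigD1 w) // [in RHS](bigD1 w) //= at_w.
under eq_bigr => w2 neq_w2 do under eq_bigr do rewrite off_w //.
ring.
Qed.

Lemma S_BR_sent_msg_optimal u sigma rho w m m' :
    (forall w, 0 < mu0 w) -> S_BR mu0 u sigma rho -> 0 < sigma w m ->
  msg_utility u rho m' w <= msg_utility u rho m w.
Proof.
move=> mu0_gt0 [sigma_dist [_ sigma_best]] sigma_gt0.
have := sigma_best _ (redirect_msg_strategy w m m' sigma_dist).
rewrite payoff_redirect_msg gerDl pmulr_rle0 ?subr_le0 //.
exact: mulr_gt0.
Qed.

Lemma recommendation_payoff_point_mass act u :
  recommendation_payoff act point_mass u = \sum_w mu0 w * u (act w) w.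
Proof. by apply: eq_bigr => w _; rewrite sum_point_massM. Qed.

Definition sender_incentive_compatible uS act :=
  forall w w', uS (act w') w <= uS (act w) w.

Definition obedient uR act := forall Psi, (forall b, is_dist (Psi b)) ->
  recommendation_payoff act Psi uR <= recommendation_payoff act point_mass uR.

Definition garble rho Psi : M -> A -> R := fun m a => \sum_b rho m b * Psi b a.

Lemma garble_strategy rho Psi :
  act_strategy rho -> (forall b, is_dist (Psi b)) -> act_strategy (garble rho Psi).
Proof.
move=> rho_dist Psi_dist m; have [rho_ge0 rho_sum1] := rho_dist m; split=> [a|].
  by apply: sumr_ge0 => b _; apply: mulr_ge0 => //; case: (Psi_dist b).
rewrite exchange_big -[RHS]rho_sum1; apply: eq_bigr => b _.
by rewrite -mulr_sumr; case: (Psi_dist b) => _ ->; rewrite mulr1.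
Qed.

Lemma garble_point_mass rho Psi m b :
  rho m =1 point_mass b -> garble rho Psi m =1 Psi b.
Proof.
move=> rho_m a; rewrite -(sum_point_massM b (Psi^~ a)).
by apply: eq_bigr => c _; rewrite rho_m.
Qed.

End Payoffs.

Section EquilibriumOutcome.
Variables (R : realType) (A Omega M : finType) (mu0 : Omega -> R).
Variables (uS uR : A -> Omega -> R) (sigma : Omega -> M -> R) (rho : M -> A -> R).
Hypotheses (mu0_gt0 : forall w, 0 < mu0 w)
  (uS_inj : forall w, injective (uS^~ w))
  (eq_sr : cheap_talk_eq mu0 uS uR sigma rho)
  (pure_sr : pure_on_path sigma rho).

Let sigma_dist : msg_strategy sigma. Proof. by case: eq_sr => -[]. Qed.

Lemma sent_msg_pure w m :
  0 < sigma w m -> exists a, rho m =1 point_mass a.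
Proof. by move=> sigma_gt0; apply: pure_sr; rewrite inE; apply/existsP; exists w. Qed.

(* Messages sent in the same state are equally good for the sender, and
   [uS_inj] turns equal utilities into equal actions. *)
Lemma exists_equilibrium_outcome :
  exists act : Omega -> A, forall w m, 0 < sigma w m -> rho m =1 point_mass (act w).
Proof.
apply: (@fin_all_exists _ (fun=> A)
  (fun w a => forall m, 0 < sigma w m -> rho m =1 point_mass a)) => w.
have [m0 sigma_m0] := exists_pos_of_dist (sigma_dist w).
have [a0 rho_m0] := sent_msg_pure sigma_m0; exists a0 => m sigma_m.
have [a rho_m] := sent_msg_pure sigma_m.
have := S_BR_sent_msg_optimal m0 mu0_gt0 eq_sr.1 sigma_m.
have := S_BR_sent_msg_optimal m mu0_gt0 eq_sr.1 sigma_m0.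
rewrite (msg_utility_point_mass uS w rho_m) (msg_utility_point_mass uS w rho_m0).
move=> le_a_a0 le_a0_a; suff <- : a = a0 by [].
by apply: (uS_inj (w := w)); apply/le_anti; rewrite le_a_a0.
Qed.

Variable act : Omega -> A.
Hypothesis rho_sent : forall w m, 0 < sigma w m -> rho m =1 point_mass (act w).

Lemma equilibrium_payoff u :
  payoff mu0 u sigma rho = recommendation_payoff mu0 act point_mass u.
Proof. exact: payoff_sent_response. Qed.

Lemma equilibrium_outcome_IC : sender_incentive_compatible uS act.
Proof.
move=> w w'; have [m sigma_m] := exists_pos_of_dist (sigma_dist w).
have [m' sigma_m'] := exists_pos_of_dist (sigma_dist w').
have := S_BR_sent_msg_optimal m' mu0_gt0 eq_sr.1 sigma_m.
by rewrite (msg_utility_point_mass uS w (rho_sent sigma_m))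
  (msg_utility_point_mass uS w (rho_sent sigma_m')).
Qed.

(* Answering recommendation [b] with [Psi b] is the original receiver's
   deviation [garble rho Psi]. *)
Lemma equilibrium_outcome_obedient : obedient mu0 uR act.
Proof.
move=> Psi Psi_dist; have [_ [rho_dist rho_best]] := eq_sr.2.
have garble_sent w m : 0 < sigma w m -> garble rho Psi m =1 Psi (act w).
  by move=> sigma_m; apply/garble_point_mass/rho_sent.
rewrite -equilibrium_payoff -(payoff_sent_response mu0 uR sigma_dist garble_sent).
exact/rho_best/garble_strategy.
Qed.

End EquilibriumOutcome.

Section Recommendation.
Variables (R : realType) (A Omega M : finType) (mu0 : Omega -> R).
Variables (act : Omega -> A) (f : A -> M) (w0 : Omega).
Implicit Types (u uS uR : A -> Omega -> R) (Phi : M -> A -> R).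

Definition recommend_msg : Omega -> M -> R := fun w => point_mass (f (act w)).

(* Messages outside the range of [f \o act] are answered by the action of
   some state, so that the sender never gains by sending them. *)
Definition recommend_act : M -> A -> R :=
  fun m => point_mass (act (odflt w0 [pick w | f (act w) == m])).

Lemma recommend_msg_strategy : msg_strategy recommend_msg.
Proof. by move=> w; apply: point_mass_dist. Qed.

Lemma recommend_msg_partitional : partitional recommend_msg.
Proof. by move=> w; exists (f (act w)); rewrite /recommend_msg /point_mass eqxx. Qed.

Lemma recommend_act_strategy : act_strategy recommend_act.
Proof. by move=> m; apply: point_mass_dist. Qed.

Lemma recommend_act_pure : pure_strategy recommend_act.
Proof. by move=> m; eexists. Qed.

Lemma card_on_path_recommend_msg : (#|on_path recommend_msg| <= #|A|)%N.
Proof.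
have on_path_sub : on_path recommend_msg \subset f @: [set: A].
  apply/subsetP => m; rewrite inE => /existsP[w /point_mass_gt0 ->].
  exact: imset_f.
apply: leq_trans (subset_leq_card on_path_sub) _.
by rewrite (leq_trans (leq_imset_card _ _)) ?cardsT.
Qed.

Lemma payoff_recommend_msg u Phi : payoff mu0 u recommend_msg Phi =
  recommendation_payoff mu0 act (fun b => Phi (f b)) u.
Proof.
by apply: payoff_sent_response recommend_msg_strategy _ => w m /point_mass_gt0 ->.
Qed.

Hypothesis f_inj : injective f.

Lemma payoff_recommendation u : payoff mu0 u recommend_msg recommend_act =
  recommendation_payoff mu0 act point_mass u.
Proof.
apply: payoff_sent_response recommend_msg_strategy _ => w m /point_mass_gt0 -> a.
rewrite /recommend_act; case: pickP => [w' /eqP/f_inj -> //|/(_ w)].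
by rewrite eqxx.
Qed.

Lemma recommend_S_BR uS : (forall w, 0 <= mu0 w) ->
  sender_incentive_compatible uS act -> S_BR mu0 uS recommend_msg recommend_act.
Proof.
move=> mu0_ge0 act_IC; split; [exact: recommend_msg_strategy | split].
  exact: recommend_act_strategy.
move=> sigma' sigma'_dist; rewrite payoff_recommendation payoffE.
rewrite recommendation_payoff_point_mass; apply: ler_sum => w _.
apply: ler_wpM2l => //; have [sigma'_ge0 sigma'_sum1] := sigma'_dist w.
rewrite -[leRHS]mul1r -sigma'_sum1 mulr_suml.
apply: ler_sum => m _; apply: ler_wpM2l => //.
rewrite /msg_utility /recommend_act sum_point_massM; exact: act_IC.
Qed.

Lemma recommend_R_BR uR :
  obedient mu0 uR act -> R_BR mu0 uR recommend_msg recommend_act.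
Proof.
move=> act_obedient; split; [exact: recommend_msg_strategy | split].
  exact: recommend_act_strategy.
move=> rho' rho'_dist; rewrite payoff_recommend_msg payoff_recommendation.
exact: act_obedient.
Qed.

End Recommendation.
Arguments recommend_msg {R A Omega M} act f.
Arguments recommend_act {R A Omega M} act f w0.

Lemma exists_inj_of_card_le (T T' : finType) :
  (#|T| <= #|T'|)%N -> exists f : T -> T', injective f.
Proof.
move=> le_TT'; exists (fun t => enum_val (widen_ord le_TT' (enum_rank t))).
by move=> t1 t2 /enum_val_inj[] /ord_inj /enum_rank_inj.
Qed.

Theorem lemma5 (R : realType) (A Omega M : finType)
    (mu0 : Omega -> R) (uS uR : A -> Omega -> R)
    (hA : (0 < #|A|)%N) (hOmega : (0 < #|Omega|)%N)
    (hM : (maxn #|Omega| #|A| < #|M|)%N)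
    (hmu0pos : forall w, 0 < mu0 w) (hmu0sum : \sum_(w : Omega) mu0 w = 1)
    (huS : forall a w, 0 <= uS a w <= 1) (huR : forall a w, 0 <= uR a w <= 1)
    (hscant : scant_indifferences uS uR)
    (sigma : Omega -> M -> R) (rho : M -> A -> R)
    (heq : cheap_talk_eq mu0 uS uR sigma rho)
    (hpers : is_persuasion_payoff M mu0 uS uR (payoff mu0 uS sigma rho))
    (hpop : pure_on_path sigma rho) :
  exists (sigma' : Omega -> M -> R) (rho' : M -> A -> R),
    [/\ msg_strategy sigma' /\ partitional sigma',
        act_strategy rho' /\ pure_strategy rho',
        (#|on_path sigma'| <= #|A|)%N,
        cheap_talk_eq mu0 uS uR sigma' rho'
      & is_persuasion_payoff M mu0 uS uR (payoff mu0 uS sigma' rho')].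
Proof.
have [w0 _] := card_gt0P hOmega.
have [f f_inj] : exists f : A -> M, injective f.
  by apply/exists_inj_of_card_le/ltnW; apply: leq_ltn_trans (leq_maxr _ _) hM.
have uS_inj := scant_indifferences_inj hscant.
have [act rho_sent] := exists_equilibrium_outcome hmu0pos uS_inj heq hpop.
exists (recommend_msg act f), (recommend_act act f w0); split.
- by split; [apply: recommend_msg_strategy | apply: recommend_msg_partitional].
- by split; [apply: recommend_act_strategy | apply: recommend_act_pure].
- exact: card_on_path_recommend_msg.
- split; [apply: recommend_S_BR | apply: recommend_R_BR] => //.
  + by move=> w; apply: ltW.
  + exact: (equilibrium_outcome_IC hmu0pos heq rho_sent).
  + exact: (equilibrium_outcome_obedient heq rho_sent).
- by rewrite payoff_recommendation // -(equilibrium_payoff heq rho_sent).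
Qed.
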